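(* Let $\mathcal{X}\subseteq\mathbb{R}^n$, $\mathcal{Z}=\mathcal{X}\times\mathcal{Y}$, $\rho$ a probability distribution on $\mathcal{Z}$, $d$ a metric on $\mathcal{X}$, $\mathcal{W}\subseteq\mathbb{R}^p$ compact, and $\ell:\mathcal{Z}\times\mathcal{W}\to\mathbb{R}^+$ differentiable in $x$ and convex with respect to the input, i.e. for all $x,x'\in\mathcal{X}$, $y\in\mathcal{Y}$, $w\in\mathcal{W}$, $$\ell((x',y),w)-\ell((x,y),w)\ge\langle\nabla_x\ell((x,y),w),x'-x\rangle.$$ Define $R^*_\epsilon=\inf_{w\in\mathcal{W}}\mathbb{E}_{(x,y)\sim\rho}\big[\sup_{x':d(x,x')\le\epsilon}\ell((x',y),w)\big]$. Then $$R^*_\epsilon\ge R^*_0+\inf_{w\in\mathcal{W}}\mathbb{E}_{z=(x,y)\sim\rho}\Big[\sup_{x':d(x,x')\le\epsilon}\langle\nabla_x\ell((x,y),w),x'-x\rangle\Big].$$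
   Context: $R^*_0=\inf_{w}\mathbb{E}_{z\sim\rho}\ell(z,w)$ is the optimal standard risk. *)

From HB Require Import structures.
From mathcomp Require Import all_boot all_order all_algebra.
From mathcomp Require Import all_classical all_reals all_analysis.
Set Implicit Arguments. Unset Strict Implicit. Unset Printing Implicit Defensive.
Import Order.TTheory GRing.Theory Num.Theory.
Import numFieldNormedType.Exports.
Local Open Scope classical_set_scope.
Local Open Scope ring_scope.

Definition borel_rV (R : realType) (n : nat) :=
  g_sigma_algebraType (@open 'rV[R]_n).

Definition dotv (R : realType) (n : nat) (u v : 'rV[R]_n) : R :=
  \sum_(i < n) u 0 i * v 0 i.

Definition grad (R : realType) (n : nat) (f : 'rV[R]_n -> R) (x : 'rV[R]_n)
  : 'rV[R]_n := \row_(i < n) ('d f x (delta_mx 0 i : 'rV[R]_n)).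

Definition is_metric_on (R : realType) (n : nat) (X : set 'rV[R]_n)
  (dist : 'rV[R]_n -> 'rV[R]_n -> R) : Prop :=
  (forall x x', X x -> X x' -> 0 <= dist x x') /\
  (forall x x', X x -> X x' -> (dist x x' = 0 <-> x = x')) /\
  (forall x x', X x -> X x' -> dist x x' = dist x' x) /\
  (forall x x' x'', X x -> X x' -> X x'' -> dist x x'' <= dist x x' + dist x' x'').

(** Convexity in the input gives, for every [x'] in the [eps]-ball around [x],
    [loss x + <grad loss x, x' - x> <= loss x'], hence pointwise
    [loss x + sup_x' <grad loss x, x' - x> <= sup_x' loss x'].  Integrating
    against [P] (the integral is superadditive and monotone on nonnegative
    functions; both summands are nonnegative because [x] lies in its own ball)
    bounds the adversarial risk of every [w] from below by the sum of two
    quantities, each of which dominates its infimum over [W]. *)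
From HB Require Import structures.
From mathcomp Require Import all_boot all_order all_algebra.
From mathcomp Require Import all_classical all_reals all_analysis.
Import Order.TTheory GRing.Theory Num.Theory.
Import numFieldNormedType.Exports.
Set Implicit Arguments. Unset Strict Implicit. Unset Printing Implicit Defensive.
Local Open Scope classical_set_scope.
Local Open Scope ring_scope.

Section ereal_sup_adde.
Local Open Scope ereal_scope.
Variable R : realType.
Implicit Types (x c : \bar R) (A B : set \bar R).

Lemma ge_adde_ereal_sup x c B :
  (forall b, B b -> x + b <= c) -> x + ereal_sup B <= c.
Proof.
move=> xBc; have [->|] := eqVneq (ereal_sup B) -oo; first by rewrite addeNy leNye.
rewrite -ltNye => /ereal_sup_gt[b Bb /gt_eqF/negbT bNy].
case: x xBc => [r | | ] xBc; last by rewrite addNye leNye.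
- by rewrite -leeBrDl //; apply: ge_ereal_sup => b' /xBc; rewrite leeBrDl.
- by have := xBc _ Bb; rewrite addye // leye_eq => /eqP->; rewrite leey.
Qed.

Lemma ge_ereal_supD A B c :
  (forall a b, A a -> B b -> a + b <= c) -> ereal_sup A + ereal_sup B <= c.
Proof.
move=> ABc; rewrite addeC; apply: ge_adde_ereal_sup => a Aa.
by rewrite addeC; apply: ge_adde_ereal_sup => b; exact: ABc.
Qed.

Lemma ereal_sup_image_addl_le T (S : set T) (a : R) (f g : T -> R) :
  (forall t, S t -> (a + g t <= f t)%R) ->
  a%:E + ereal_sup [set (g t)%:E | t in S] <= ereal_sup [set (f t)%:E | t in S].
Proof.
move=> agf; apply: ge_adde_ereal_sup => _ [t St <-].
apply: (@le_trans _ _ (f t)%:E); first by rewrite -EFinD lee_fin; exact: agf.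
by apply: ereal_sup_ubound; exists t.
Qed.

End ereal_sup_adde.

(** The integral of a nonnegative function is the supremum of the integrals of
    the simple functions below it, so the following hold without any
    measurability assumption (the adversarial suprema need not be measurable). *)
Section ge0_integral_nonmeasurable.
Local Open Scope ereal_scope.
Context d (T : measurableType d) (R : realType).
Variables (mu : {measure set T -> \bar R}) (D : set T).
Import HBNNSimple.

Lemma ge0_le_integral_nonmeasurable (f g : T -> \bar R) :
  (forall t, D t -> 0 <= f t) -> (forall t, D t -> f t <= g t) ->
  \int[mu]_(t in D) f t <= \int[mu]_(t in D) g t.
Proof.
move=> f0 fg.
have g0 t : D t -> 0 <= g t by move=> Dt; exact: le_trans (f0 _ Dt) (fg _ Dt).
rewrite (ge0_integralE _ f0) (ge0_integralE _ g0); apply: ereal_sup_le.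
move=> _ [h hf <-]; exists h => // t; apply: le_trans (hf t) _.
by rewrite /patch; case: ifPn => // /set_mem /fg.
Qed.

Lemma ge0_le_integralD_nonmeasurable (f g : T -> \bar R) :
  (forall t, D t -> 0 <= f t) -> (forall t, D t -> 0 <= g t) ->
  \int[mu]_(t in D) f t + \int[mu]_(t in D) g t <= \int[mu]_(t in D) (f t + g t).
Proof.
move=> f0 g0.
have fg0 t : D t -> 0 <= f t + g t by move=> Dt; exact: adde_ge0 (f0 _ Dt) (g0 _ Dt).
rewrite (ge0_integralE _ f0) (ge0_integralE _ g0) (ge0_integralE _ fg0).
apply: ge_ereal_supD => _ _ [h1 h1f <-] [h2 h2g <-]; rewrite -sintegralD.
apply: ereal_sup_ubound; exists (add_nnsfun h1 h2) => //= t.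
have := h2g t; have := h1f t; rewrite /patch EFinD; case: ifPn => _; first exact: leeD.
by move=> h10 h20; rewrite -[leRHS]adde0; exact: leeD.
Qed.

Lemma ge0_le_integralD_sum (f g h : T -> \bar R) :
  (forall t, D t -> 0 <= f t) -> (forall t, D t -> 0 <= g t) ->
  (forall t, D t -> f t + g t <= h t) ->
  \int[mu]_(t in D) f t + \int[mu]_(t in D) g t <= \int[mu]_(t in D) h t.
Proof.
move=> f0 g0 fgh; apply: le_trans (ge0_le_integralD_nonmeasurable f0 g0) _.
by apply: ge0_le_integral_nonmeasurable => // t Dt; exact: adde_ge0 (f0 _ Dt) (g0 _ Dt).
Qed.

End ge0_integral_nonmeasurable.

Lemma dotv0r (R : realType) (n : nat) (u : 'rV[R]_n) : dotv u 0 = 0.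
Proof. by rewrite /dotv big1 // => i _; rewrite mxE mulr0. Qed.

Theorem theorem11 (R : realType) (n p : nat) (d : measure_display)
  (Y : measurableType d) (X : set 'rV[R]_n)
  (P : probability (borel_rV R n * Y)%type R)
  (dist : 'rV[R]_n -> 'rV[R]_n -> R) (W : set 'rV[R]_p)
  (loss : 'rV[R]_n -> Y -> 'rV[R]_p -> R) (eps : R) :
  P.-negligible (~` (X `*` [set: Y])) ->
  is_metric_on X dist ->
  compact W ->
  (forall x y w, X x -> W w -> 0 <= loss x y w) ->
  (forall x y w, X x -> W w -> differentiable (fun x' => loss x' y w) x) ->
  (forall x x' y w, X x -> X x' -> W w ->
     loss x' y w - loss x y w >= dotv (grad (fun u => loss u y w) x) (x' - x)) ->
  0 <= eps ->
  (ereal_inf [set (\int[P]_(z in X `*` [set: Y])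
                    ereal_sup [set (loss x' z.2 w)%:E
                              | x' in [set x' | X x' /\ (dist z.1 x' <= eps)%R]])%E
             | w in W]
   >= ereal_inf [set (\int[P]_(z in X `*` [set: Y]) (loss z.1 z.2 w)%:E)%E
                | w in W]
      + ereal_inf [set (\int[P]_(z in X `*` [set: Y])
                    ereal_sup [set (dotv (grad (fun u => loss u z.2 w) z.1) (x' - z.1))%:E
                              | x' in [set x' | X x' /\ (dist z.1 x' <= eps)%R]])%E
                  | w in W])%E.
Proof.
move=> _ [_ [dist_eq0 _]] _ loss_ge0 _ first_order eps_ge0.
apply: le_ereal_inf_tmp => _ [w Ww <-].
apply: le_trans; first by apply: leeD; apply: ereal_inf_lbound; exists w.
apply: (ge0_le_integralD_sum P) => [[x y] [/= Xx _] | [x y] [/= Xx _] | [x y] [/= Xx _]].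
- by rewrite lee_fin loss_ge0.
- apply: le_ereal_sup_tmp; exists 0%E => //; exists x; last by rewrite subrr dotv0r.
  by rewrite /= (proj2 (dist_eq0 _ _ Xx Xx)).
- apply: ereal_sup_image_addl_le => x' [Xx' _].
  by rewrite -lerBrDl; exact: first_order.
Qed.
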